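(* Let $[x,y;z]$ be a geodesic of weight $w$ with complementary weight $w'$. Then $\rho([x,y;z])$ is a geodesic if and only if $G$ contains the $R$-linear map $\sigma:U\to U$ defined by $\sigma(x)=-y$ and $\sigma(z)=z-w'y$.
   Context: Let $R$ be a commutative ring, $U$ a free rank-$2$ $R$-module with non-degenerate symplectic pairing $\langle,\rangle$, $C$ an $R$-linear involution of $U$ of determinant $-1$, and $G\subseteq\mathrm{SL}(U)$ a subgroup containing $-1$ and stable under $g\mapsto CgC$. A basis vector is an element generating a direct summand. Let $\mathscr T$ be the set of triples $[x,y;z]$ of basis vectors with $\langle x,z\rangle=\langle z,y\rangle=1$ and $x+y=wz$ for some $w\in\{1,2\}$ (the weight); the complementary weight is $w'=3-w$. Define $\rho([x,y;z])=[z,z-w'x;y]\in\mathscr T$. A triple satisfies condition (c) if there is $g\in G$ with $Cg-1=w'\langle -,x\rangle y$ and $Cg+1=w'\langle -,y\rangle x$, where $\langle -,x\rangle y$ denotes $u\mapsto\langle u,x\rangle y$; this condition is invariant under $\rho^2$. A geodesic is a class in $\mathscr T/\langle\rho^2\rangle$ satisfying (c), and $\rho$ induces a map on $\mathscr T/\langle\rho^2\rangle$. *)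

From HB Require Import structures.
From mathcomp Require Import all_boot all_order all_algebra.
Set Implicit Arguments. Unset Strict Implicit. Unset Printing Implicit Defensive.
Import Order.TTheory GRing.Theory Num.Theory.
Local Open Scope ring_scope.

(* The free rank-2 module U is modelled (after choosing a basis) as column
   vectors 'cV[R]_2; R-linear endomorphisms of U are 2x2 matrices acting by
   left multiplication. *)

Definition pairing (R : comPzRingType) (B : 'M[R]_2) (u v : 'cV[R]_2) : R :=
  (u^T *m B *m v) 0 0.

(* A non-degenerate symplectic (alternating) pairing: <u,u> = 0 for all u,
   and the induced map U -> U^* is an isomorphism (B invertible: it has a two-sided inverse matrix). *)
Definition symplectic (R : comPzRingType) (B : 'M[R]_2) : Prop :=
  (forall u, pairing B u u = 0) /\ exists B' : 'M[R]_2, B *m B' = 1%:M /\ B' *m B = 1%:M.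

Definition SL_subgroup (R : comPzRingType) (G : 'M[R]_2 -> Prop) : Prop :=
  [/\ forall g, G g -> \det g = 1,
      G 1%:M,
      forall g h, G g -> G h -> G (g *m h)
    & forall g, G g -> exists h, [/\ G h, g *m h = 1%:M & h *m g = 1%:M]].

(* u is a basis vector: R u is a direct summand of U, i.e. R u is the image
   of an idempotent R-linear endomorphism of U. *)
Definition basis_vector (R : comPzRingType) (u : 'cV[R]_2) : Prop :=
  exists p : 'M[R]_2,
    p *m p = p /\ p *m u = u /\ forall v, exists r : R, p *m v = r *: u.

Record triple (R : comPzRingType) := Triple {
  tx : 'cV[R]_2; ty : 'cV[R]_2; tz : 'cV[R]_2; tw : nat }.

Definition is_triple (R : comPzRingType) (B : 'M[R]_2) (t : triple R) : Prop :=
  [/\ basis_vector (tx t) /\ basis_vector (ty t) /\ basis_vector (tz t),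
      pairing B (tx t) (tz t) = 1, pairing B (tz t) (ty t) = 1,
      (tw t = 1%N \/ tw t = 2%N)
    & tx t + ty t = (tw t)%:R *: tz t].

Definition cweight (R : comPzRingType) (t : triple R) : nat := (3 - tw t)%N.

Definition rho (R : comPzRingType) (t : triple R) : triple R :=
  Triple (tz t) (tz t - (cweight t)%:R *: tx t) (ty t) (cweight t).

Definition cond_c (R : comPzRingType) (B C : 'M[R]_2) (G : 'M[R]_2 -> Prop)
    (t : triple R) : Prop :=
  exists g, G g /\
    forall u : 'cV[R]_2,
      (C *m g) *m u - u = ((cweight t)%:R * pairing B u (tx t)) *: ty t /\
      (C *m g) *m u + u = ((cweight t)%:R * pairing B u (ty t)) *: tx t.

(* A triple whose rho^2-class is a geodesic ((c) is rho^2-invariant). *)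
Definition geodesic (R : comPzRingType) (B C : 'M[R]_2) (G : 'M[R]_2 -> Prop)
    (t : triple R) : Prop :=
  is_triple B t /\ cond_c B C G t.

From HB Require Import structures.
From mathcomp Require Import all_boot all_order all_algebra ring.
Import GRing.Theory.
Local Open Scope ring_scope.
Set Implicit Arguments. Unset Strict Implicit.

(* Since <x,z> = 1 and the pairing is alternating of rank 2, x and z form a
   basis and a linear map is determined by its values on them.  Hence
   condition (c) for [x,y;z] says that f = C g fixes x and sends z to
   z - w'y; such an f is an involution with f y = -y.  Condition (c) for
   rho([x,y;z]) = [z, z - w'x; y] asks for h in G with C h fixing z and
   sending y to x.  Writing C h = f sigma, i.e. sigma = g^-1 h, and applying
   the involution f, this becomes sigma x = -y and sigma z = z - w'y. *)

Section AlternatingPairing.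
Variables (R : comPzRingType) (B : 'M[R]_2).

Lemma pairingDl u v t : pairing B (u + v) t = pairing B u t + pairing B v t.
Proof. by rewrite /pairing linearD /= !mulmxDl mxE. Qed.

Lemma pairingDr t u v : pairing B t (u + v) = pairing B t u + pairing B t v.
Proof. by rewrite /pairing mulmxDr mxE. Qed.

Lemma pairingBr t u v : pairing B t (u - v) = pairing B t u - pairing B t v.
Proof. by rewrite /pairing mulmxBr !mxE. Qed.

Lemma pairingZr t a u : pairing B t (a *: u) = a * pairing B t u.
Proof. by rewrite /pairing -scalemxAr mxE. Qed.

Lemma mulmx_mx11 (v : 'cV[R]_2) (c : 'M[R]_1) : v *m c = c 0 0 *: v.
Proof. by rewrite [c]mx11_scalar mul_mx_scalar mxE. Qed.

Definition pair_mx (x y : 'cV[R]_2) : 'M[R]_2 := y *m (B *m x)^T.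

Lemma pair_mxE x y u : pair_mx x y *m u = pairing B u x *: y.
Proof.
rewrite /pair_mx -mulmxA mulmx_mx11 /pairing -mulmxA.
by rewrite -[(B *m x)^T *m u]trmxK trmx_mul trmxK mxE.
Qed.

Lemma basis_vector_pairing1 u v : pairing B u v = 1 -> basis_vector v.
Proof.
move=> huv; pose r := u^T *m B.
have rv : v *m (r *m v) = v by rewrite mulmx_mx11 -/(pairing B u v) huv scale1r.
exists (v *m r); split; [|split].
- by rewrite -mulmxA [r *m (v *m r)]mulmxA mulmxA rv.
- by rewrite -mulmxA rv.
- by move=> t; exists (pairing B u t); rewrite -mulmxA mulmx_mx11.
Qed.

Hypothesis alt : forall u, pairing B u u = 0.

Lemma pairing_skew u v : pairing B u v = - pairing B v u.
Proof.
apply/eqP; rewrite -subr_eq0 opprK.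
have := alt (u + v); rewrite pairingDl !pairingDr !alt add0r addr0 => <-.
by rewrite addrC.
Qed.

Lemma alt_pairingE u v :
  pairing B u v = B 0 1 * (u 0 0 * v 1 0 - u 1 0 * v 0 0).
Proof.
have pairing_coord s t : pairing B s t = s 0 0 * (B 0 0 * t 0 0 + B 0 1 * t 1 0)
                                        + s 1 0 * (B 1 0 * t 0 0 + B 1 1 * t 1 0).
  rewrite /pairing !mxE !big_ord_recl !big_ord0 !mxE !big_ord_recl !big_ord0 !mxE /=.
  by rewrite (_ : lift ord0 ord0 = 1); [ring | exact: val_inj].
pose e (a b : R) : 'cV[R]_2 := \col_i (if i == 0 then a else b).
have e0 a b : e a b 0 0 = a by rewrite mxE.
have e1 a b : e a b 1 0 = b by rewrite mxE.
have := alt (e 1 0); have := alt (e 0 1); have := alt (e 1 1).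
rewrite !pairing_coord !e0 !e1 => h11 h01 h10.
have b00 : B 0 0 = 0 by rewrite -h10; ring.
have b11 : B 1 1 = 0 by rewrite -h01; ring.
have b10 : B 1 0 = - B 0 1.
  by apply/eqP; rewrite -subr_eq0 opprK -h11 b00 b11; apply/eqP; ring.
by rewrite b00 b11 b10; ring.
Qed.

Lemma pairing_decomp x z u :
  pairing B x z = 1 -> u = pairing B u z *: x - pairing B u x *: z.
Proof.
rewrite alt_pairingE => hxz; apply/matrixP => i j; rewrite [j]ord1.
have [->|->] : i = 0 \/ i = 1 by case: i => [[|[|]]] // ?; [left|right]; apply: val_inj.
all: by rewrite !mxE !alt_pairingE -[LHS]mulr1 -hxz; ring.
Qed.

Lemma eq_mulmx_dual_pair x z (M N : 'M[R]_2) :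
  pairing B x z = 1 -> M *m x = N *m x -> M *m z = N *m z ->
  forall u : 'cV[R]_2, M *m u = N *m u.
Proof.
move=> hxz hx hz u; rewrite (pairing_decomp u hxz).
by rewrite !mulmxBr -!scalemxAr hx hz.
Qed.

End AlternatingPairing.

Section WeightedTriple.
Variables (R : comPzRingType) (B : 'M[R]_2).
Hypothesis alt : forall u, pairing B u u = 0.
Variables (x y z : 'cV[R]_2) (w : nat).
Hypotheses (hw : w = 1%N \/ w = 2%N) (Pxz : pairing B x z = 1)
  (Pzy : pairing B z y = 1) (hxy : x + y = w%:R *: z).
Local Notation w' := (3 - w)%N.

Lemma cweight_mul_weight : w'%:R * w%:R = 2 :> R.
Proof. by rewrite -natrM; case: hw => ->. Qed.

Lemma cweightE : w'%:R = 3 - w%:R :> R.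
Proof. by rewrite natrB //; case: hw => ->. Qed.

Local Ltac weight_cases :=
  rewrite ?cweightE; case: hw => ->; apply/matrixP => i j; rewrite !mxE; ring.

Lemma triple_yE : y = w%:R *: z - x.
Proof. by rewrite -hxy addrAC subrr add0r. Qed.

Lemma triple_xE : x = w%:R *: z - y.
Proof. by rewrite -hxy addrK. Qed.

Lemma pairing_zx : pairing B z x = -1.
Proof. by rewrite (pairing_skew alt) Pxz. Qed.

Lemma pairing_xy : pairing B x y = w%:R.
Proof. by rewrite triple_yE pairingBr pairingZr Pxz alt mulr1 subr0. Qed.

Lemma pairing_y_rho : pairing B y (z - w'%:R *: x) = 1.
Proof.
rewrite pairingBr pairingZr (pairing_skew alt y) (pairing_skew alt y) Pzy pairing_xy.
by rewrite mulrN opprK cweight_mul_weight; ring.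
Qed.

Lemma triple_rho_sum : z + (z - w'%:R *: x) = w'%:R *: y.
Proof. by rewrite triple_yE; weight_cases. Qed.

Lemma cond_c_equationsE (f : 'M[R]_2) :
  (forall u, f *m u - u = (w'%:R * pairing B u x) *: y /\
             f *m u + u = (w'%:R * pairing B u y) *: x) <->
  f *m x = x /\ f *m z = z - w'%:R *: y.
Proof.
have fB v : (f - 1%:M) *m v = f *m v - v by rewrite mulmxBl mul1mx.
have fD v : (f + 1%:M) *m v = f *m v + v by rewrite mulmxDl mul1mx.
have pZ a s t v : (a *: pair_mx B s t) *m v = (a * pairing B v s) *: t.
  by rewrite -scalemxAl pair_mxE scalerA.
split=> [feq | [fx fz] u].
  have [/eqP fx _] := feq x; have [/eqP fz _] := feq z.
  rewrite alt mulr0 scale0r subr_eq0 in fx; rewrite pairing_zx subr_eq in fz.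
  by rewrite (eqP fx) (eqP fz) mulrN1 scaleNr addrC.
rewrite -fB -fD -!pZ; split; apply: (eq_mulmx_dual_pair alt Pxz).
- by rewrite fB pZ fx alt mulr0 scale0r subrr.
- by rewrite fB pZ fz pairing_zx mulrN1 scaleNr addrAC subrr add0r.
- by rewrite fD pZ fx pairing_xy cweight_mul_weight scaler_nat mulr2n.
- by rewrite fD pZ fz Pzy mulr1 triple_yE; weight_cases.
Qed.

Section Reflection.
Variable f : 'M[R]_2.
Hypotheses (fx : f *m x = x) (fz : f *m z = z - w'%:R *: y).

Lemma reflection_y : f *m y = - y.
Proof.
by rewrite {1}triple_yE mulmxBr -scalemxAr fz fx triple_yE; weight_cases.
Qed.

Lemma reflectionK (u : 'cV[R]_2) : f *m (f *m u) = u.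
Proof.
rewrite mulmxA -[RHS]mul1mx; apply: (eq_mulmx_dual_pair alt Pxz).
  by rewrite -mulmxA !fx mul1mx.
by rewrite -mulmxA fz mulmxBr -scalemxAr fz reflection_y scalerN opprK subrK mul1mx.
Qed.

Lemma reflection_twistE (s : 'M[R]_2) :
  (f *m s *m z = z /\ f *m s *m y = y - w%:R *: (z - w'%:R *: x)) <->
  (s *m x = - y /\ s *m z = z - w'%:R *: y).
Proof.
have fK (u v : 'cV[R]_2) : f *m u = v <-> u = f *m v.
  by split=> [<- | ->]; rewrite reflectionK.
have -> : y - w%:R *: (z - w'%:R *: x) = x.
  by rewrite triple_yE; weight_cases.
rewrite -!mulmxA !fK fz fx.
split=> -[sz sx]; split=> //.
- by rewrite triple_xE mulmxBr -scalemxAr sz sx triple_yE; weight_cases.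
- by rewrite triple_yE mulmxBr -scalemxAr sx sz triple_yE; weight_cases.
Qed.

End Reflection.
End WeightedTriple.

Section Geodesics.
Variables (R : comPzRingType) (B C : 'M[R]_2) (G : 'M[R]_2 -> Prop).
Hypothesis alt : forall u, pairing B u u = 0.

Lemma is_triple_rho t : is_triple B t -> is_triple B (rho t).
Proof.
case: t => x y z w [[_ [yb zb]] /= Pxz Pzy hw hxy].
have Pyv := pairing_y_rho alt hw Pxz Pzy hxy.
rewrite /rho /cweight /=; split=> //.
- by split=> //; split=> //; exact: basis_vector_pairing1 Pyv.
- by case: hw => ->; [right | left].
- exact: triple_rho_sum hw hxy.
Qed.

Lemma cweight_rho (t : triple R) : (tw t = 1 \/ tw t = 2)%N -> cweight (rho t) = tw t.
Proof. by case: t => x y z w /= [] ->. Qed.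

Lemma cond_cE t : is_triple B t ->
  cond_c B C G t <->
  exists2 g, G g & C *m g *m tx t = tx t /\ C *m g *m tz t = tz t - (cweight t)%:R *: ty t.
Proof.
case: t => x y z w [_ Pxz Pzy hw hxy] /=.
have eqnsE := cond_c_equationsE alt hw Pxz Pzy hxy.
by split=> [[g [Gg /eqnsE hg]] | [g Gg /eqnsE hg]]; exists g.
Qed.

End Geodesics.

Theorem lemma4p1 (R : comPzRingType) (B C : 'M[R]_2) (G : 'M[R]_2 -> Prop)
    (x y z : 'cV[R]_2) (w : nat) :
  symplectic B ->
  C *m C = 1%:M -> \det C = -1 ->
  SL_subgroup G -> G (- 1%:M) ->
  (forall g, G g -> G (C *m g *m C)) ->
  geodesic B C G (Triple x y z w) ->
  (geodesic B C G (rho (Triple x y z w)) <->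
   exists sigma : 'M[R]_2,
     [/\ G sigma, sigma *m x = - y & sigma *m z = z - (3 - w)%:R *: y]).
Proof.
move=> [alt _] _ _ [_ _ GM Ginv] _ _ [tT /(cond_cE C G alt tT) [g Gg [fx fz]]].
have [_ /= Pxz _ hw hxy] := tT.
have rhoT := is_triple_rho alt tT.
have twistE := reflection_twistE alt hw Pxz hxy fx fz.
rewrite /geodesic (cond_cE C G alt rhoT) (@cweight_rho _ (Triple x y z w) hw) /=.
split=> [[_ [h Gh hh]] | [s [Gs sx sz]]].
- have [g' [Gg' gg' _]] := Ginv g Gg.
  have [sx sz] : g' *m h *m x = - y /\ g' *m h *m z = z - (3 - w)%:R *: y.
    by apply/twistE; rewrite !mulmxA -(mulmxA C) gg' mulmx1.
  by exists (g' *m h); split=> //; apply: GM.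
- split=> //; exists (g *m s); first exact: GM.
  by rewrite mulmxA; apply/twistE.
Qed.
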